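(* Let $k$ be a field of characteristic $p>2$ ($p$ prime). For any $u,v,w\in k_1\langle X\rangle$, $$\kappa(u,vw)\equiv v^p\kappa(u,w)+w^p\kappa(u,v)\pmod{T^{(3)}}.$$ In particular, if $u,v\in k_0\langle X\rangle$ and $\alpha\in k$, then $\kappa(u,\alpha v)=\alpha^p\kappa(u,v)$.
   Context: $X=\{x_i\mid i\ge0\}$ is countably infinite; $k_1\langle X\rangle$ (resp. $k_0\langle X\rangle$) is the free unitary (resp. nonunitary) associative $k$-algebra on $X$. $[a,b]=ab-ba$, $[a,b,c]=[[a,b],c]$. $T^{(3)}$ is the $T$-ideal of $k_1\langle X\rangle$ (ideal invariant under all endomorphisms) generated by $[x_1,x_2,x_3]$. $\kappa(u,v)=[u,v]u^{p-1}v^{p-1}$. *)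

From HB Require Import structures.
From mathcomp Require Import all_boot all_order all_algebra.
From mathcomp.multinomials Require Import monalg.
Set Implicit Arguments. Unset Strict Implicit. Unset Printing Implicit Defensive.
Import GRing.Theory.
Local Open Scope ring_scope.

(* The free unitary associative k-algebra k_1<X> on X = {x_i | i >= 0}:
   k-linear combinations of (noncommutative) words over nat. *)
Definition freeAlg (k : fieldType) := {malg k[fmonom nat]}.

Definition xvar (k : fieldType) (i : nat) : freeAlg k := << fmu i >>.

(* k_0<X>: the nonunitary free algebra, i.e. the elements with zero
   constant term (coefficient of the empty word). *)
Definition in_k0 (k : fieldType) (f : freeAlg k) : Prop := f@_(fmone nat) = 0.

Definition comm (R : ringType) (a b : R) : R := a * b - b * a.
Definition comm3 (R : ringType) (a b c : R) : R := comm (comm a b) c.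

Definition kappa (R : ringType) (p : nat) (u v : R) : R :=
  comm u v * u ^+ p.-1 * v ^+ p.-1.

Definition is_ideal (R : ringType) (S : R -> Prop) : Prop :=
  [/\ S 0, (forall a b, S a -> S b -> S (a + b)), (forall a, S a -> S (- a)),
      (forall a b, S b -> S (a * b)) & (forall a b, S a -> S (a * b))].

Definition is_Tideal (k : fieldType) (S : freeAlg k -> Prop) : Prop :=
  is_ideal S /\
  forall (f : {lrmorphism freeAlg k -> freeAlg k}) a, S a -> S (f a).

Definition T3 (k : fieldType) (a : freeAlg k) : Prop :=
  forall S : freeAlg k -> Prop, is_Tideal S ->
    S (comm3 (xvar k 1) (xvar k 2) (xvar k 3)) -> S a.

(** Modulo T^(3) every commutator is central, and a product of two
    commutators sharing an entry vanishes: [x,y][x,t] = [[x,yx],t] - [[x,y],t] x.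
    Hence, in the annihilator of [u,v] (or of [u,w]) modulo T^(3), the elements
    u, v, w pairwise commute.  Moreover [x^p, y] = p x^(p-1) [x,y] = 0, so p-th
    powers are central modulo T^(3).  Expanding [u,vw] = [u,v] w + v [u,w] in
    kappa(u,vw) and reordering each summand inside the annihilator of its
    commutator gives the congruence.  The scalar identity holds because scalars
    are central in k_1<X>. *)

From HB Require Import structures.
From mathcomp Require Import all_boot all_order all_algebra.
From mathcomp.multinomials Require Import monalg.
From Stdlib Require Import Setoid Morphisms.
Import GRing.Theory.
Local Open Scope ring_scope.

Set Implicit Arguments. Unset Strict Implicit.

(* Bundled, so that the setoid instances below need no side condition. *)
Record ideal (R : nzRingType) :=
  Ideal { ideal_mem :> R -> Prop; idealP : is_ideal ideal_mem }.

Definition eqmod (R : nzRingType) (I : ideal R) (a b : R) := I (a - b).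

(* Lets [done] close reflexive instances of the congruence. *)
#[local] Hint Extern 0 (eqmod _ _ _) => reflexivity : core.

Section IdealCongruence.
Variables (R : nzRingType) (I : ideal R).

Lemma ideal0 : I 0. Proof. by case: (idealP I). Qed.
Lemma idealD a b : I a -> I b -> I (a + b). Proof. by case: (idealP I) => _ h *; apply: h. Qed.
Lemma idealN a : I a -> I (- a). Proof. by case: (idealP I) => _ _ h *; apply: h. Qed.
Lemma idealMl a b : I b -> I (a * b). Proof. by case: (idealP I) => _ _ _ h *; apply: h. Qed.
Lemma idealMr a b : I a -> I (a * b). Proof. by case: (idealP I) => _ _ _ _ h *; apply: h. Qed.

Global Instance eqmod_equiv : Equivalence (eqmod I).
Proof.
split=> [a | a b | a b c]; rewrite /eqmod.
- by rewrite subrr; apply: ideal0.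
- by move=> Iab; rewrite -opprB; apply: idealN.
- by move=> Iab Ibc; rewrite -[a](subrK b) -addrA; apply: idealD.
Qed.

Global Instance eqmod_add : Proper (eqmod I ==> eqmod I ==> eqmod I) +%R.
Proof. by move=> a a' Ia b b' Ib; rewrite /eqmod opprD addrACA; apply: idealD. Qed.

Global Instance eqmod_mul : Proper (eqmod I ==> eqmod I ==> eqmod I) *%R.
Proof.
move=> a a' Ia b b' Ib; rewrite /eqmod -[a * b](subrK (a' * b)) -addrA -mulrBl -mulrBr.
by apply: idealD; [apply: idealMr | apply: idealMl].
Qed.

Global Instance ideal_eqmod : Proper (eqmod I ==> iff) I.
Proof.
move=> a b Iab; split=> [Ia | Ib].
  have -> : b = a - (a - b) by rewrite opprB addrC subrK.
  by apply: idealD => //; apply: idealN.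
by rewrite -[a](subrK b); apply: idealD.
Qed.

Lemma eqmod0 a : I a -> eqmod I a 0. Proof. by rewrite /eqmod subr0. Qed.

Lemma commute_modXr x y n :
  eqmod I (x * y) (y * x) -> eqmod I (x * y ^+ n) (y ^+ n * x).
Proof.
move=> cxy; elim: n => [|n IHn]; first by rewrite expr0 mulr1 mul1r.
by rewrite exprSr mulrA IHn -mulrA cxy mulrA.
Qed.

Lemma exprMn_mod x y n :
  eqmod I (x * y) (y * x) -> eqmod I ((x * y) ^+ n) (x ^+ n * y ^+ n).
Proof.
move=> cxy; elim: n => [|n IHn]; first by rewrite !expr0 mulr1.
rewrite !exprSr IHn -mulrA (mulrA _ x) -(commute_modXr n cxy).
by rewrite !mulrA.
Qed.

End IdealCongruence.

Section Annihilator.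
Variables (R : nzRingType) (J : ideal R) (c : R).
Hypothesis c_central : forall x, eqmod J (c * x) (x * c).

Lemma ann_is_ideal : is_ideal (fun a => J (c * a)).
Proof.
split=> [|a b Ia Ib|a Ia|a b Ib|a b Ia].
- by rewrite mulr0; apply: ideal0.
- by rewrite mulrDr; apply: idealD.
- by rewrite mulrN; apply: idealN.
- by rewrite mulrA c_central -mulrA; apply: idealMl.
- by rewrite mulrA; apply: idealMr.
Qed.

Definition ann := Ideal ann_is_ideal.

Lemma eqmod_ann a b : eqmod ann a b -> eqmod J (c * a) (c * b).
Proof. by rewrite /eqmod /= mulrBr. Qed.

End Annihilator.

Lemma comm_mulr (R : nzRingType) (x y z : R) :
  comm x (y * z) = comm x y * z + y * comm x z.
Proof. by rewrite /comm mulrBl mulrBr !mulrA addrA subrK. Qed.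

Lemma comm_mull (R : nzRingType) (x y z : R) :
  comm (x * y) z = x * comm y z + comm x z * y.
Proof. by rewrite /comm mulrBl mulrBr !mulrA addrA subrK. Qed.

Lemma commN (R : nzRingType) (x y : R) : comm x y = - comm y x.
Proof. by rewrite /comm opprB. Qed.

Section CommutatorsCentralMod.
Variables (R : nzRingType) (J : ideal R).
Hypothesis comm3_mem : forall a b c, J (comm3 a b c).

Lemma comm_central a b x : eqmod J (comm a b * x) (x * comm a b).
Proof. exact: comm3_mem. Qed.

Lemma comm_mul_comm_shared_l x y t : J (comm x y * comm x t).
Proof.
have e : comm x (y * x) = comm x y * x by rewrite /comm mulrBl !mulrA.
have := comm3_mem x (y * x) t; rewrite /comm3 e comm_mull.
by rewrite (eqmod0 (idealMr x (comm3_mem x y t))) addr0.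
Qed.

Lemma comm_mul_comm_shared a b x y :
  [|| x == a, x == b, y == a | y == b] -> J (comm a b * comm x y).
Proof.
case/or4P=> /eqP->.
- exact: comm_mul_comm_shared_l.
- by rewrite commN mulNr; apply: idealN; apply: comm_mul_comm_shared_l.
- by rewrite [comm x a]commN mulrN; apply: idealN; apply: comm_mul_comm_shared_l.
- by rewrite commN [comm x b]commN mulrNN; apply: comm_mul_comm_shared_l.
Qed.

Lemma comm_exprSl x y n :
  eqmod J (comm (x ^+ n.+1) y) (x ^+ n * comm x y *+ n.+1).
Proof.
elim: n => [|n IHn]; first by rewrite expr1 expr0 mul1r.
rewrite exprS comm_mull IHn mulrnAr mulrA -exprS (comm_central x y).
by rewrite -mulrSr.
Qed.

Variable p : nat.
Hypotheses (p_gt0 : (0 < p)%N) (pchar_p : p%:R = 0 :> R).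

Lemma exprp_central x y : eqmod J (x ^+ p * y) (y * x ^+ p).
Proof.
rewrite /eqmod -[_ - _]/(comm _ _) -(prednK p_gt0) comm_exprSl prednK //.
by rewrite -mulr_natr pchar_p mulr0; apply: ideal0.
Qed.

Lemma kappa_mul_mod u v w :
  eqmod J (kappa p u (v * w)) (v ^+ p * kappa p u w + w ^+ p * kappa p u v).
Proof.
set n := p.-1; have p_eq : p = n.+1 by rewrite prednK.
have cA x y : [|| x == u, x == v, y == u | y == v] ->
    eqmod (ann (comm_central u v)) (x * y) (y * x).
  exact: comm_mul_comm_shared.
have cB x y : [|| x == u, x == w, y == u | y == w] ->
    eqmod (ann (comm_central u w)) (x * y) (y * x).
  exact: comm_mul_comm_shared.
have tA : eqmod J (comm u v * w * u ^+ n * (v * w) ^+ n)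
                  (w ^+ p * (comm u v * u ^+ n * v ^+ n)).
  rewrite exprp_central -!mulrA; apply: (eqmod_ann (c_central := comm_central u v)).
  rewrite (exprMn_mod n (cA v w _)) ?eqxx ?orbT //.
  rewrite mulrA (commute_modXr n (cA w u _)) ?eqxx ?orbT //.
  rewrite -mulrA (mulrA w) (commute_modXr n (cA w v _)) ?eqxx ?orbT //.
  by rewrite p_eq exprS !mulrA.
have tB : eqmod J (v * comm u w * u ^+ n * (v * w) ^+ n)
                  (v ^+ p * (comm u w * u ^+ n * w ^+ n)).
  rewrite exprp_central -(comm_central u w v) -!mulrA.
  apply: (eqmod_ann (c_central := comm_central u w)).
  rewrite (exprMn_mod n (cB v w _)) ?eqxx ?orbT //.
  rewrite mulrA (commute_modXr n (cB v u _)) ?eqxx ?orbT //.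
  rewrite -mulrA (mulrA v) -exprS -p_eq (commute_modXr n (cB _ w _)) ?eqxx ?orbT //.
by rewrite /kappa comm_mulr mulrDl mulrDl addrC tA tB.
Qed.

End CommutatorsCentralMod.

Lemma kappa_mul_central (R : nzRingType) (p : nat) (c u v : R) :
  (0 < p)%N -> (forall x, GRing.comm c x) ->
  kappa p u (c * v) = c ^+ p * kappa p u v.
Proof.
case: p => // n _ c_central; rewrite /kappa /= exprS exprMn_comm //.
have -> : comm u (c * v) = c * comm u v by rewrite /comm mulrBr mulrA -c_central !mulrA.
rewrite -!mulrA; congr (c * _); rewrite !mulrA; congr (_ * _).
by rewrite -[RHS]mulrA; apply/commrX/commr_sym.
Qed.

Section FreeAlgebra.
Variable k : fieldType.

Lemma mul_malgCr (c : k) (f : freeAlg k) : f * c%:MP = c *: f.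
Proof.
by rewrite malgM_def malgZ_def fgmulgU; apply/eq_bigr => m _; rewrite mulm1 mulrC.
Qed.

Lemma malgC_central (c : k) (f : freeAlg k) : GRing.comm c%:MP f.
Proof. by rewrite /GRing.comm mul_malgC mul_malgCr. Qed.

Lemma pchar_freeAlg p : p \in [pchar k] -> p%:R = 0 :> freeAlg k.
Proof. by move=> pchar_p; rewrite -mpolyC_nat (pcharf0 pchar_p) malgC0E. Qed.

End FreeAlgebra.

Section Substitution.
Variables (k : fieldType) (g : nat -> freeAlg k).

Definition eval_word (m : fmonom nat) : freeAlg k := \prod_(i <- (m : seq nat)) g i.

Lemma eval_word_is_mmorphism : mmorphism eval_word.
Proof. by split=> [m1 m2|]; rewrite /eval_word ?fmM ?big_cat // fm1 big_nil. Qed.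

HB.instance Definition _ :=
  isMultiplicative.Build (fmonom nat) (freeAlg k) eval_word eval_word_is_mmorphism.

Definition subst_fun : freeAlg k -> freeAlg k := mmap (@malgC _ k) eval_word.

HB.instance Definition _ :=
  GRing.Additive.copy subst_fun (mmap (@malgC _ k) eval_word).

Lemma subst_fun_is_multiplicative : multiplicative subst_fun.
Proof. by apply: commr_mmap_is_multiplicative => c m m'; apply: malgC_central. Qed.

HB.instance Definition _ := GRing.isMultiplicative.Build (freeAlg k) (freeAlg k)
  subst_fun subst_fun_is_multiplicative.

Lemma subst_fun_is_scalable : scalable subst_fun.
Proof. by move=> c f; rewrite /subst_fun mmapZ mul_malgC. Qed.

HB.instance Definition _ := GRing.isScalable.Build k (freeAlg k) (freeAlg k) *:%R
  subst_fun subst_fun_is_scalable.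

Definition subst : {lrmorphism freeAlg k -> freeAlg k} := subst_fun.

Lemma subst_xvar i : subst (xvar k i) = g i.
Proof.
change (subst_fun (xvar k i) = g i).
by rewrite /subst_fun /xvar mmapU /= mpolyC1E mul1r /eval_word fmU big_seq1.
Qed.

End Substitution.

Lemma T3_is_ideal (k : fieldType) : is_ideal (@T3 k).
Proof.
split=> [S [[? _ _ _ _] _] _ // | a b Ta Tb S IS x3 | a Ta S IS x3
        | a b Tb S IS x3 | a b Ta S IS x3];
  case: (IS) => [[_ SD SN SMl SMr] _].
- exact: SD (Ta S IS x3) (Tb S IS x3).
- exact: SN (Ta S IS x3).
- exact: SMl (Tb S IS x3).
- exact: SMr (Ta S IS x3).
Qed.

Lemma lrmorph_comm3 (R : nzRingType) (A B : lalgType R) (f : {lrmorphism A -> B})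
    (a b c : A) :
  f (comm3 a b c) = comm3 (f a) (f b) (f c).
Proof. by rewrite /comm3 /comm !(rmorphB, rmorphM). Qed.

Lemma T3_comm3 (k : fieldType) (a b c : freeAlg k) : T3 (comm3 a b c).
Proof.
move=> S [_ S_subst] Sx3.
pose g i : freeAlg k := if i == 1%N then a else if i == 2%N then b else c.
by have := S_subst (subst g) _ Sx3; rewrite lrmorph_comm3 !subst_xvar.
Qed.

Theorem lemma2p5 (k : fieldType) (p : nat) :
  prime p -> (p \in [pchar k]) -> (2 < p)%N ->
  (forall u v w : freeAlg k,
     T3 (kappa p u (v * w) - (v ^+ p * kappa p u w + w ^+ p * kappa p u v)))
  /\
  (forall (u v : freeAlg k) (alpha : k), in_k0 u -> in_k0 v ->
     kappa p u (alpha *: v) = alpha ^+ p *: kappa p u v).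
Proof.
move=> /prime_gt0 p_gt0 pchar_p _; split=> [u v w | u v alpha _ _].
  exact: (kappa_mul_mod (J := Ideal (@T3_is_ideal k)) (@T3_comm3 k) p_gt0
                        (pchar_freeAlg pchar_p)).
by rewrite -!mul_malgC kappa_mul_central ?rmorphXn //; apply: malgC_central.
Qed.
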